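(* Let $X_1,\ldots,X_n$ be non-empty sets and $S\subset X_1\times\cdots\times X_n$ be relatively full. Then every maximal good subset $M\subset S$ is full.
   Context: $\Pi_i$ denotes the canonical projection onto $X_i$. A subset $T$ is good if every complex-valued function $f$ on $T$ can be written as $f(x_1,\ldots,x_n)=u_1(x_1)+\cdots+u_n(x_n)$ on $T$ for suitable functions $u_i$ on $X_i$. $T$ is full if it is a maximal good subset of $\Pi_1T\times\cdots\times\Pi_nT$. A maximal good subset of $S$ is a good subset of $S$ not strictly contained in any other good subset of $S$. $U(S)$ denotes the set of functions $f$ on $S$ for which there exist functions $u_i$ on $\Pi_iS$ with $f=u_1+\cdots+u_n$ on $S$. The set $S$ is relatively full if there exist $x_i^0\in\Pi_iS$, $1\le i\le n-1$, such that every $f\in U(S)$ has a unique representation $f=u_1+\cdots+u_n$ on $S$ (with $u_i$ functions on $\Pi_iS$) once the values $u_i(x_i^0)$, $1\le i\le n-1$, are prescribed. *)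

From HB Require Import structures.
From mathcomp Require Import all_boot all_order all_algebra.
From mathcomp Require Import complex.
From mathcomp Require Import reals.
Set Implicit Arguments. Unset Strict Implicit. Unset Printing Implicit Defensive.
Import Order.TTheory GRing.Theory Num.Theory.
Local Open Scope ring_scope.

Section Defs.
Variables (R : realType) (n : nat) (X : 'I_n -> Type).

Definition point := forall i : 'I_n, X i.
Definition pset := point -> Prop.

Definition proj (i : 'I_n) (T : pset) : X i -> Prop :=
  fun x => exists t, T t /\ t i = x.
Arguments proj : clear implicits.

Definition sumrep (u : forall i : 'I_n, X i -> complex R) (t : point) : complex R :=
  \sum_(i < n) u i (t i).

Definition subset (A B : pset) : Prop := forall t, A t -> B t.

Definition good (T : pset) : Prop :=
  forall f : point -> complex R,
    exists u : forall i : 'I_n, X i -> complex R, forall t, T t -> f t = sumrep u t.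

Definition maximal_good (S M : pset) : Prop :=
  [/\ good M, subset M S &
      forall M', good M' -> subset M' S -> subset M M' -> subset M' M].

Definition prod_proj (T : pset) : pset := fun t => forall i, proj i T (t i).

Definition full (T : pset) : Prop := maximal_good (prod_proj T) T.

Definition represents (S : pset) (f : point -> complex R)
  (u : forall i : 'I_n, X i -> complex R) : Prop :=
  forall t, S t -> f t = sumrep u t.

(* Relatively full: there are base points x_i^0 in Pi_i S (1 <= i <= n-1)
   such that any two representations of the same f in U(S) (functions u_i
   considered on Pi_i S) that agree at the x_i^0, i <= n-1, coincide on
   each Pi_i S. (Existence of a representation with prescribed values is
   automatic by shifting constants.) *)
Definition relatively_full (S : pset) : Prop :=
  exists x0 : point,
    (forall i : 'I_n, (i < n.-1)%N -> proj i S (x0 i)) /\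
    forall (f : point -> complex R) (u v : forall i : 'I_n, X i -> complex R),
      represents S f u -> represents S f v ->
      (forall i : 'I_n, (i < n.-1)%N -> u i (x0 i) = v i (x0 i)) ->
      forall (i : 'I_n) (x : X i), proj i S x -> u i x = v i x.

End Defs.
Arguments proj {n X} i T _.

From Pilot Require Import Defs.
From mathcomp Require Import all_boot all_order all_algebra.
From mathcomp Require Import complex reals.
From Stdlib Require Import Classical ClassicalEpsilon.
Set Implicit Arguments. Unset Strict Implicit. Unset Printing Implicit Defensive.
Import Order.TTheory GRing.Theory Num.Theory.
Local Open Scope ring_scope.

(* Let M be maximal good in S and let M' with M ⊆ M' ⊆ Π_1 M × ... × Π_n M be
   good.  For p in M', a representation w of the indicator of p on M' vanishes
   on M.  If it did not vanish at some s in S, then adding s to M would keep M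
   good (correct any representation by a multiple of w), so by maximality it
   vanishes on all of S.  Relative fullness then forces every w_i to be
   constant on Π_i S, hence w_1 + ... + w_n is constant, equal to 0, on
   Π_1 S × ... × Π_n S, which contains p.  So p lies in M. *)

Lemma zero_sum_fit (V : zmodType) (k : nat) (a : 'I_k -> V) :
  exists2 c : 'I_k -> V,
    \sum_(i < k) c i = 0 & forall i : 'I_k, (i < k.-1)%N -> c i = a i.
Proof.
case: k a => [|k] a; first by exists a; rewrite ?big_ord0.
exists (fun i : 'I_k.+1 =>
  if (i < k)%N then a i else - \sum_(j < k) a (widen_ord (leqnSn k) j)).
  rewrite big_ord_recr /= ltnn.
  under eq_bigr => j _ do rewrite /= (ltn_ord j).
  exact: subrr.
by move=> i /= ->.
Qed.

Section Representations.
Variables (R : realType) (n : nat) (X : 'I_n -> Type).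
Implicit Types (S T M : pset X) (w : forall i : 'I_n, X i -> complex R).

Lemma subset_prod_proj T : Defs.subset T (prod_proj T).
Proof. by move=> t Tt i; exists t. Qed.

Lemma prod_proj_subset S T : Defs.subset S T -> Defs.subset (prod_proj S) (prod_proj T).
Proof. by move=> sST t Pt i; have [s [Ss <-]] := Pt i; exists s; split; [apply: sST|]. Qed.

Lemma sumrepDZ u w (c : complex R) t :
  sumrep (fun i x => u i x + c * w i x) t = sumrep u t + c * sumrep w t.
Proof. by rewrite /sumrep big_split /= mulr_sumr. Qed.

Lemma good_indicator T p : good R T -> T p ->
  exists w, sumrep w p = 1 /\ forall t, T t -> t <> p -> sumrep w t = 0.
Proof.
move=> gT Tp.
have [w hw] := gT (fun t => if excluded_middle_informative (t = p) then 1 else 0).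
exists w; split; first by rewrite -hw //; case: excluded_middle_informative.
by move=> t Tt ntp; rewrite -hw //; case: excluded_middle_informative.
Qed.

Lemma good_setU1 M w s : good R M ->
  (forall t, M t -> sumrep w t = 0) -> sumrep w s != 0 ->
  good R (fun t => M t \/ t = s).
Proof.
move=> gM w0M ws g; have [u hu] := gM g.
exists (fun i x => u i x + (g s - sumrep u s) / sumrep w s * w i x) => t.
rewrite sumrepDZ; case=> [Mt|->]; first by rewrite (w0M t Mt) mulr0 addr0 hu.
by rewrite mulfVK // addrC subrK.
Qed.

Lemma maximal_good_sumrep_eq0 S M w : maximal_good R S M ->
  (forall t, M t -> sumrep w t = 0) -> forall s, S s -> sumrep w s = 0.
Proof.
case=> gM sMS maxM w0M s Ss; apply: NNPP => /eqP ws.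
have gMs := good_setU1 gM w0M ws.
have Ms : M s.
  apply: (maxM _ gMs _ _ s (or_intror erefl)).
  - by move=> t [/sMS|->].
  - by move=> t Mt; left.
by move/eqP: ws; rewrite (w0M s Ms).
Qed.

Lemma relatively_full_sumrep_const S w : relatively_full R S ->
  (forall t, S t -> sumrep w t = 0) ->
  forall i x y, proj i S x -> proj i S y -> w i x = w i y.
Proof.
case=> x0 [_ uniq_rep] w0S i x y Sx Sy.
(* Constants summing to 0 that agree with w at the base points represent 0 too. *)
have [c c_sum0 c_x0] := zero_sum_fit (fun j => w j (x0 j)).
have rep_w : represents S (fun _ => 0) w by move=> t /w0S.
have rep_c : represents S (fun _ => 0) (fun j _ => c j).
  by move=> t _; rewrite /sumrep c_sum0.
have w_c := uniq_rep _ _ _ rep_w rep_c (fun j hj => esym (c_x0 j hj)) i.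
by rewrite w_c // w_c.
Qed.

Lemma relatively_full_sumrep_eq0 S w : relatively_full R S ->
  (forall t, S t -> sumrep w t = 0) -> forall t, prod_proj S t -> sumrep w t = 0.
Proof.
move=> rf w0S t St; have [n0|n_gt0] := posnP n.
  by apply: big1 => i _; suff : (i < 0)%N by []; rewrite -n0.
have [s [Ss _]] := St (Ordinal n_gt0).
rewrite -(w0S s Ss); apply: eq_bigr => i _.
by apply: (relatively_full_sumrep_const rf w0S); [apply: St | exists s].
Qed.

End Representations.

Theorem theorem5 (R : realType) (n : nat) (X : 'I_n -> Type)
  (Xne : forall i : 'I_n, inhabited (X i)) (S : pset X) :
  relatively_full R S ->
  forall M : pset X, maximal_good R S M -> full R M.
Proof.
move=> rf M maxM; have [gM sMS _] := maxM.
split=> //; first exact: subset_prod_proj.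
move=> M' gM' sM'P sMM' p M'p; apply: NNPP => nMp.
have [w [wp w0M']] := good_indicator gM' M'p.
have w0M : forall t, M t -> sumrep w t = 0.
  by move=> t Mt; apply: w0M' (sMM' t Mt) _ => tp; apply: nMp; rewrite -tp.
have w0S := maximal_good_sumrep_eq0 maxM w0M.
have := relatively_full_sumrep_eq0 rf w0S (prod_proj_subset sMS (sM'P p M'p)).
by rewrite wp; apply/eqP; exact: oner_neq0.
Qed.
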